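(* Let $\circ$ be an alternative operation on $V=\mathbb{F}_2^m$ (in the sense of the context). Then for every $\lambda\in H_\circ$ one has $W_\circ\lambda=W_\circ$ and $U_\circ\lambda=U_\circ$.
   Context: Vectors of $V=\mathbb{F}_2^m$ are row vectors and maps are written in postfix notation ($xf$ is the image of $x$ under $f$). $+$ denotes the usual (xor) addition. An alternative operation on $V$ is defined from an elementary abelian $2$-subgroup $T<\mathrm{AGL}(V,+)$ acting regularly on $V$: writing $\tau_a$ for the unique element of $T$ with $0\tau_a=a$, set $a\circ b:=a\tau_b$; then $(V,\circ)$ is an elementary abelian $2$-group whose translation group is $T_\circ=T$. $\mathrm{AGL}(V,\circ)$ denotes the normaliser of $T_\circ$ in $\mathrm{Sym}(V)$ and $\mathrm{GL}(V,\circ)$ its stabiliser of $0$. It is assumed that the xor-translation group $T_+=\{x\mapsto x+a : a\in V\}$ is contained in $\mathrm{AGL}(V,\circ)$. The weak key space is $W_\circ=\{k\in V : x\circ k=x+k \text{ for all } x\in V\}$. The product is $a\cdot b:=a+b+a\circ b$ and the error space is $U_\circ=\{a\cdot b: a,b\in V\}$. Finally $H_\circ:=\mathrm{GL}(V,+)\cap\mathrm{GL}(V,\circ)$, i.e. the xor-linear bijections $f$ with $(a\circ b)f=af\circ bf$ for all $a,b$. *)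

(* V = F_2^m is 'rV['F_2]_m (row vectors, maps act on the
   right: x *m M). *)
From mathcomp Require Import all_boot all_order all_algebra all_fingroup.
Set Implicit Arguments. Unset Strict Implicit. Unset Printing Implicit Defensive.
Import GRing.Theory.
Local Open Scope ring_scope.

Notation V m := 'rV['F_2]_m.

Definition affine_map (m : nat) (f : V m -> V m) : Prop :=
  exists (M : 'M['F_2]_m) (c : V m), M \in unitmx /\ forall x, f x = x *m M + c.

(* tau a is the translation tau_a (so x tau_a = tau a x); the group
   T = { tau a | a in V } < AGL(V,+) is an elementary abelian 2-group acting
   regularly with 0 tau_a = a, and T_+ normalises T. *)
Record alt_translations (m : nat) (tau : V m -> V m -> V m) : Prop := {
  tau_affine : forall a, affine_map (tau a);
  tau_zero : forall a, tau a 0 = a;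
  tau_id : exists a, forall x, tau a x = x;
  tau_closed : forall a b, exists c, forall x, tau b (tau a x) = tau c x;
  tau_invol : forall a x, tau a (tau a x) = x;
  tau_comm : forall a b x, tau b (tau a x) = tau a (tau b x);
  tau_plus_normal : forall a b, exists c, forall x, tau b (x + a) + a = tau c x
}.

Definition circ (m : nat) (tau : V m -> V m -> V m) (a b : V m) : V m := tau b a.

Definition weak_keys (m : nat) (tau : V m -> V m -> V m) : {set V m} :=
  [set k | [forall x, circ tau x k == x + k]].

Definition dotop (m : nat) (tau : V m -> V m -> V m) (a b : V m) : V m :=
  a + b + circ tau a b.

Definition error_space (m : nat) (tau : V m -> V m -> V m) : {set V m} :=
  [set dotop tau ab.1 ab.2 | ab in [set: V m * V m]].

Definition in_H (m : nat) (tau : V m -> V m -> V m) (L : 'M['F_2]_m) : Prop :=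
  L \in unitmx /\
  forall a b, circ tau a b *m L = circ tau (a *m L) (b *m L).

From mathcomp Require Import all_boot all_order all_algebra all_fingroup.
Set Implicit Arguments. Unset Strict Implicit. Unset Printing Implicit Defensive.
Import GRing.Theory.
Local Open Scope ring_scope.

(* A matrix in H_o is an automorphism of both (V, +) and (V, o), hence of the
   product a . b = a + b + a o b and of the defining identity x o k = x + k of
   a weak key; so it maps W_o and U_o into themselves, and, being injective on
   the finite space V, onto themselves. *)

Lemma imset_inj_eq (T : finType) (f : T -> T) (A : {set T}) :
  injective f -> {in A, forall x, f x \in A} -> f @: A = A.
Proof.
move=> inj_f fA; apply/eqP; rewrite eqEcard card_imset // leqnn andbT.
by apply/subsetP => _ /imsetP [x Ax ->]; exact: fA.
Qed.

Section HcircAction.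

Variables (m : nat) (tau : V m -> V m -> V m) (L : 'M['F_2]_m).
Hypothesis HL : in_H tau L.

Lemma mulmx_weak_key (k : V m) : k \in weak_keys tau -> k *m L \in weak_keys tau.
Proof.
case: HL => uL hom; rewrite !inE => /forallP wk; apply/forallP => y.
by rewrite -[y](mulmxKV uL) -hom (eqP (wk _)) mulmxDl.
Qed.

Lemma mulmx_dotop (a b : V m) :
  dotop tau a b *m L = dotop tau (a *m L) (b *m L).
Proof. by case: HL => _ hom; rewrite /dotop !mulmxDl hom. Qed.

Lemma mulmx_error_space (e : V m) :
  e \in error_space tau -> e *m L \in error_space tau.
Proof.
case/imsetP => -[a b] _ ->; rewrite mulmx_dotop.
by apply/imsetP; exists (a *m L, b *m L); rewrite ?inE.
Qed.

End HcircAction.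

Theorem lemma1 (m : nat) (tau : 'rV['F_2]_m -> 'rV['F_2]_m -> 'rV['F_2]_m)
  (Htau : alt_translations tau) (L : 'M['F_2]_m) (HL : in_H tau L) :
  [set x *m L | x in weak_keys tau] = weak_keys tau /\
  [set x *m L | x in error_space tau] = error_space tau.
Proof.
have inj_L : injective (fun x : V m => x *m L) := can_inj (mulmxK HL.1).
split; apply: imset_inj_eq inj_L _ => x.
- exact: (mulmx_weak_key HL).
- exact: (mulmx_error_space HL).
Qed.
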